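(* Let $p,q\in(0,1)$ and $N\ge1$. For all $x,y\in\mathbb{N}$ with $\min(x,y)\ge N$, $$\mathbb{P}^{(x,y)}_{p,q}(\tau<+\infty)\le\mathbb{P}^{(1,1)}_{p,q}(\tau<+\infty)^N.$$
   Context: Cooperative model: for $p,q\in(0,1)$, a Markov chain $(X_n,Y_n)_{n\ge0}$ on $\mathbb{N}^2$ whose transition law from state $(x,y)$ is $\mu_{(x,y)}=\mathrm{Bin}(2,q)^{*(x+y)}\otimes\mathrm{Bin}(2,p)^{*\min(x,y)}$, i.e. given the past, $X_{n+1}\sim\mathrm{Bin}(2(X_n+Y_n),q)$ and $Y_{n+1}\sim\mathrm{Bin}(2\min(X_n,Y_n),p)$ are independent. $\mathbb{P}^{(x,y)}_{p,q}$ denotes the law of this process started from $(x,y)$. $Z_n=\min(X_n,Y_n)$ and $\tau=\inf\{n\ge0: Z_n=0\}$. *)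

From HB Require Import structures.
From mathcomp Require Import all_boot all_order all_algebra.
From mathcomp Require Import all_classical all_reals all_analysis.
Set Implicit Arguments. Unset Strict Implicit. Unset Printing Implicit Defensive.
Import Order.TTheory GRing.Theory Num.Theory numFieldNormedType.Exports.
Local Open Scope ring_scope.

(* Binomial pmf: P(Bin(m,r) = k). Note Bin(2,r)^{*m} = Bin(2m,r). *)
Definition binom_pmf (R : realType) (r : R) (m k : nat) : R :=
  ('C(m, k))%:R * r ^+ k * (1 - r) ^+ (m - k).

Definition coop_trans (R : realType) (p q : R) (x y x' y' : nat) : R :=
  binom_pmf q (2 * (x + y))%N x' * binom_pmf p (2 * minn x y)%N y'.

(* coop_hit_le p q n x y = P^{(x,y)}_{p,q}(tau <= n), where
   tau = inf{n >= 0 : min(X_n,Y_n) = 0}; computed by the Markov property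
   (first-step decomposition). *)
Fixpoint coop_hit_le (R : realType) (p q : R) (n x y : nat) : R :=
  if minn x y == 0%N then 1 else
  match n with
  | 0 => 0
  | n'.+1 => \sum_(i < (2 * (x + y)).+1) \sum_(j < (2 * minn x y).+1)
              coop_trans p q x y i j * coop_hit_le p q n' i j
  end.

(* P^{(x,y)}_{p,q}(tau < +oo) = lim_n P^{(x,y)}(tau <= n) (nondecreasing, bounded). *)
Definition coop_hit_prob (R : realType) (p q : R) (x y : nat) : R :=
  limn (fun n => coop_hit_le p q n x y).

(* Write h_n(x, y) for the probability that tau <= n from (x, y).  Conditioning
   on the first step, h_{n+1}(x, y) = E[h_n(X, Y)] with X ~ Bin(2(x + y), q) and
   Y ~ Bin(2 min(x, y), p) independent.  Both binomial parameters are
   superadditive in the state, and Bin(m1 + m2, r) is the sum of independent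
   Bin(m1, r) and Bin(m2, r) variables; hence, by induction on n, h_n is
   nonincreasing in each coordinate and submultiplicative:
   h_n(a + c, b + d) <= h_n(a, b) h_n(c, d).  Splitting off N copies of (1, 1)
   gives h_n(x, y) <= h_n(1, 1)^N, and one lets n -> oo.
   A binomial expectation is computed as an iterate of a one-trial averaging
   operator, so the splitting of a binomial into independent parts becomes a
   composition of iterates, and each property only has to be checked for a
   single averaging step. *)

From HB Require Import structures.
From mathcomp Require Import all_boot all_order all_algebra.
From mathcomp Require Import all_classical all_reals all_analysis.
From mathcomp Require Import ring lra zify.
Import Order.TTheory GRing.Theory Num.Theory numFieldNormedType.Exports.
Local Open Scope ring_scope.

Section BinomialSums.
Context {R : realType}.
Variable r : R.

Definition bernoulli_avg (f : nat -> R) : nat -> R :=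
  fun i => (1 - r) * f i + r * f i.+1.

Lemma binom_pmf_small M i : (M < i)%N -> binom_pmf r M i = 0.
Proof. by move=> ltMi; rewrite /binom_pmf bin_small // !mul0r. Qed.

Lemma binom_pmfS0 M : binom_pmf r M.+1 0 = (1 - r) * binom_pmf r M 0.
Proof. by rewrite /binom_pmf !bin0 !subn0 exprS; ring. Qed.

Lemma binom_pmfSS M i :
  binom_pmf r M.+1 i.+1 = (1 - r) * binom_pmf r M i.+1 + r * binom_pmf r M i.
Proof.
rewrite /binom_pmf binS subSS natrD.
have [ltiM | leMi] := ltnP i M.
  by rewrite -(subnSK ltiM) !exprS; ring.
rewrite bin_small ?ltnS // (eqP (_ : M - i == 0)%N) ?subn_eq0 // !mul0r mulr0.
by rewrite exprS; ring.
Qed.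

Lemma sum_binom_pmfS M (f : nat -> R) :
  \sum_(i < M.+2) binom_pmf r M.+1 i * f i =
  \sum_(i < M.+1) binom_pmf r M i * bernoulli_avg f i.
Proof.
rewrite big_ord_recl binom_pmfS0.
under eq_bigr => i _ do rewrite lift0 binom_pmfSS mulrDl.
under [RHS]eq_bigr => i _ do rewrite mulrDr.
rewrite !big_split /= addrA; congr (_ + _); last by apply: eq_bigr => i _; ring.
transitivity (\sum_(i < M.+2) (1 - r) * binom_pmf r M i * f i).
  by rewrite [RHS]big_ord_recl.
rewrite big_ord_recr /= binom_pmf_small // mulr0 mul0r addr0.
by apply: eq_bigr => i _; ring.
Qed.

Lemma sum_binom_pmfE M (f : nat -> R) :
  \sum_(i < M.+1) binom_pmf r M i * f i = iter M bernoulli_avg f 0.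
Proof.
elim: M f => [|M IH] f.
  by rewrite big_ord_recl big_ord0 /binom_pmf bin0 !expr0 !mul1r addr0.
by rewrite sum_binom_pmfS IH iterSr.
Qed.

End BinomialSums.

Lemma iter_invariant (T : Type) (P : T -> Prop) (f : T -> T) k x :
  (forall x, P x -> P (f x)) -> P x -> P (iter k f x).
Proof. by move=> Pf Px; elim: k => //= k; apply: Pf. Qed.

Lemma iter_invariant2 (T : Type) (P : T -> T -> Prop) (f : T -> T) k x y :
  (forall x y, P x y -> P (f x) (f y)) -> P x y -> P (iter k f x) (iter k f y).
Proof. by move=> Pf Pxy; elim: k => //= k; apply: Pf. Qed.

Definition antitone2 {R : realDomainType} (g : nat -> nat -> R) :=
  forall i j i' j', (i <= i')%N -> (j <= j')%N -> g i' j' <= g i j.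

Definition le_pointwise {R : realDomainType} (g g' : nat -> nat -> R) :=
  forall i j, g i j <= g' i j.

Definition submul_split {R : realDomainType} (F1 F2 F : nat -> nat -> R) :=
  forall i1 j1 i2 j2, F (i1 + i2)%N (j1 + j2)%N <= F1 i1 j1 * F2 i2 j2.

Section ShiftAverage.
Context {R : realDomainType}.
Variables (r : R) (di dj : nat).

Definition shift_avg (g : nat -> nat -> R) : nat -> nat -> R :=
  fun i j => (1 - r) * g i j + r * g (i + di)%N (j + dj)%N.

Hypotheses (r_ge0 : 0 <= r) (r_le1 : r <= 1).

Let onem_ge0 : 0 <= 1 - r. Proof. by rewrite subr_ge0. Qed.

Lemma shift_avg_le g g' : le_pointwise g g' -> le_pointwise (shift_avg g) (shift_avg g').
Proof. by move=> le_gg' i j; apply: lerD; apply: ler_wpM2l. Qed.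

Lemma shift_avg_ge0 g : (forall i j, 0 <= g i j) -> forall i j, 0 <= shift_avg g i j.
Proof. by move=> g_ge0 i j; apply: addr_ge0; apply: mulr_ge0. Qed.

Lemma shift_avg_antitone g : antitone2 g -> antitone2 (shift_avg g).
Proof.
move=> g_anti i j i' j' le_ii' le_jj'.
by apply: lerD; apply: ler_wpM2l => //; apply: g_anti; rewrite ?leq_add2r.
Qed.

Lemma shift_avg_le_self g : antitone2 g -> le_pointwise (shift_avg g) g.
Proof.
move=> g_anti i j.
have : g (i + di)%N (j + dj)%N <= g i j by apply: g_anti; rewrite leq_addr.
by move/(ler_wpM2l r_ge0); rewrite /shift_avg; lra.
Qed.

Lemma iter_shift_avg_antitone k g : antitone2 g -> antitone2 (iter k shift_avg g).
Proof. exact: iter_invariant shift_avg_antitone. Qed.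

Lemma iter_shift_avg_le_self k g : antitone2 g -> le_pointwise (iter k shift_avg g) g.
Proof.
move=> g_anti; elim: k => //= k IH i j.
by apply: le_trans (IH i j); apply/shift_avg_le_self/iter_shift_avg_antitone.
Qed.

Lemma submul_split_avgl F1 F2 F :
  submul_split F1 F2 F -> submul_split (shift_avg F1) F2 (shift_avg F).
Proof.
move=> F_sub i1 j1 i2 j2.
rewrite /shift_avg /= [leRHS]mulrDl -!mulrA (addnAC i1) (addnAC j1).
by apply: lerD; apply: ler_wpM2l.
Qed.

Lemma submul_split_avgr F1 F2 F :
  submul_split F1 F2 F -> submul_split F1 (shift_avg F2) (shift_avg F).
Proof.
move=> F_sub i1 j1 i2 j2.
rewrite /shift_avg /= [leRHS]mulrDr !(mulrCA (F1 _ _)) -!addnA.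
by apply: lerD; apply: ler_wpM2l.
Qed.

Lemma submul_split_iterl k F1 F2 F :
  submul_split F1 F2 F -> submul_split (iter k shift_avg F1) F2 (iter k shift_avg F).
Proof.
by apply: (@iter_invariant2 _ (submul_split^~ F2)) => F1' F'; apply: submul_split_avgl.
Qed.

Lemma submul_split_iterr k F1 F2 F :
  submul_split F1 F2 F -> submul_split F1 (iter k shift_avg F2) (iter k shift_avg F).
Proof.
by apply: (@iter_invariant2 _ (submul_split F1)) => F2' F'; apply: submul_split_avgr.
Qed.

End ShiftAverage.

Lemma iter_shift_avg_snd (R : realType) (r : R) K g i j :
  iter K (shift_avg r 0 1) g i j = iter K (bernoulli_avg r) (g i) j.
Proof. by elim: K j => [|K IH] j //; rewrite iterS {1}/shift_avg addn0 addn1 !IH. Qed.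

Lemma iter_shift_avg_fst (R : realType) (r : R) K g i j :
  iter K (shift_avg r 1 0) g i j = iter K (bernoulli_avg r) (g^~ j) i.
Proof. by elim: K i => [|K IH] i //; rewrite iterS {1}/shift_avg addn0 addn1 !IH. Qed.

Section CooperativeModel.
Context {R : realType}.
Variables p q : R.

Definition bin2_expect M K (g : nat -> nat -> R) : R :=
  iter M (shift_avg q 1 0) (iter K (shift_avg p 0 1) g) 0%N 0%N.

Lemma sum_binom_pmf2E M K (g : nat -> nat -> R) :
  \sum_(i < M.+1) \sum_(j < K.+1) (binom_pmf q M i * binom_pmf p K j) * g i j =
  bin2_expect M K g.
Proof.
under eq_bigr => i _ do under eq_bigr => j _ do rewrite -mulrA.
under eq_bigr => i _ do
  rewrite -mulr_sumr (sum_binom_pmfE p K (g i)) -iter_shift_avg_snd.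
by rewrite (sum_binom_pmfE q M (fun i => _ i 0%N)) /bin2_expect iter_shift_avg_fst.
Qed.

Hypotheses (p_ge0 : 0 <= p) (p_le1 : p <= 1) (q_ge0 : 0 <= q) (q_le1 : q <= 1).

Lemma bin2_expect_le M K g g' :
  le_pointwise g g' -> bin2_expect M K g <= bin2_expect M K g'.
Proof.
move=> le_gg'; apply: (@iter_invariant2 _ le_pointwise); first exact: shift_avg_le.
by apply: (@iter_invariant2 _ le_pointwise) => //; apply: shift_avg_le.
Qed.

Lemma bin2_expect_ge0 M K g : (forall i j, 0 <= g i j) -> 0 <= bin2_expect M K g.
Proof.
pose ge0 (g : nat -> nat -> R) := forall i j, 0 <= g i j.
move=> g_ge0; apply: (@iter_invariant _ ge0); first exact: shift_avg_ge0.
by apply: (@iter_invariant _ ge0) => //; apply: shift_avg_ge0.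
Qed.

Lemma bin2_expect_antitone M K M' K' g :
  (M <= M')%N -> (K <= K')%N -> antitone2 g -> bin2_expect M' K' g <= bin2_expect M K g.
Proof.
move=> leM leK g_anti; rewrite /bin2_expect -(subnKC leM) -(subnKC leK) !iterD.
apply: (@iter_invariant2 _ le_pointwise) => [|i j]; first exact: shift_avg_le.
have G_anti : antitone2 (iter K (shift_avg p 0 1) (iter (K' - K) (shift_avg p 0 1) g)).
  by do 2 apply: iter_shift_avg_antitone => //.
apply: le_trans (iter_shift_avg_le_self q 1 0 q_ge0 q_le1 _ _ G_anti i j) _.
apply: (@iter_invariant2 _ le_pointwise) => //; first exact: shift_avg_le.
exact: iter_shift_avg_le_self.
Qed.

Lemma bin2_expect_submul M1 M2 K1 K2 g : submul_split g g g ->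
  bin2_expect (M1 + M2) (K1 + K2) g <= bin2_expect M1 K1 g * bin2_expect M2 K2 g.
Proof.
move=> g_sub; rewrite /bin2_expect [(M1 + M2)%N]addnC [(K1 + K2)%N]addnC !iterD.
have split_iter :
    submul_split (iter M1 (shift_avg q 1 0) (iter K1 (shift_avg p 0 1) g))
    (iter M2 (shift_avg q 1 0) (iter K2 (shift_avg p 0 1) g))
    (iter M2 (shift_avg q 1 0) (iter M1 (shift_avg q 1 0)
       (iter K2 (shift_avg p 0 1) (iter K1 (shift_avg p 0 1) g)))).
  apply: submul_split_iterr => //; apply: submul_split_iterl => //.
  by apply: submul_split_iterr => //; apply: submul_split_iterl.
exact: split_iter 0%N 0%N 0%N 0%N.
Qed.

Local Notation hit n := (coop_hit_le p q n).

Lemma coop_hit_le_min0 n x y : minn x y = 0%N -> hit n x y = 1.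
Proof. by move=> xy0; case: n => [|n]; rewrite /= xy0. Qed.

Lemma coop_hit_le00 n : hit n 0 0 = 1.
Proof. exact: coop_hit_le_min0. Qed.

Lemma coop_hit_le0 x y : minn x y != 0%N -> hit 0 x y = 0.
Proof. by move/negbTE => /= ->. Qed.

Lemma coop_hit_leS n x y :
  hit n.+1 x y = bin2_expect (2 * (x + y)) (2 * minn x y) (hit n).
Proof.
have [xy0 | xy_neq0] := eqVneq (minn x y) 0%N.
  (* With no trials in the second coordinate, the average only sees the line
     j = 0, where hit is 1. *)
  rewrite coop_hit_le_min0 // xy0 /bin2_expect /=.
  apply/esym/(@iter_invariant _ (fun G => forall i, G i 0%N = 1)) => [G G1 i | i].
    by rewrite /shift_avg !G1; ring.
  by rewrite coop_hit_le_min0 // minn0.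
by rewrite /= (negbTE xy_neq0) -sum_binom_pmf2E.
Qed.

Lemma coop_hit_le_ge0 n x y : 0 <= hit n x y.
Proof.
elim: n x y => [|n IH] x y; first by rewrite /=; case: ifP.
by rewrite coop_hit_leS; apply: bin2_expect_ge0.
Qed.

Lemma coop_hit_le_submul n x y a b c d : (a + c <= x)%N -> (b + d <= y)%N ->
  hit n x y <= hit n a b * hit n c d.
Proof.
elim: n x y a b c d => [|n IH] x y a b c d le_acx le_bdy.
  have [xy0 | xy_neq0] := eqVneq (minn x y) 0%N.
    by rewrite !coop_hit_le_min0 ?mulr1 //; lia.
  by rewrite coop_hit_le0 // mulr_ge0 // coop_hit_le_ge0.
have hit_anti : antitone2 (hit n).
  move=> i j i' j' le_ii' le_jj'.
  by rewrite -[hit n i j]mulr1 -(coop_hit_le00 n) IH ?addn0.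
have hit_sub : submul_split (hit n) (hit n) (hit n) by move=> *; apply: IH.
rewrite !coop_hit_leS; apply: le_trans _ (bin2_expect_submul _ _ _ _ _ hit_sub).
by apply: bin2_expect_antitone => //; lia.
Qed.

Lemma coop_hit_le_le1 n x y : hit n x y <= 1.
Proof.
have := coop_hit_le_submul n x y 0 0 0 0 (leq0n _) (leq0n _).
by rewrite coop_hit_le00 mulr1.
Qed.

Lemma coop_hit_le_pow n k x y : (k <= minn x y)%N -> hit n x y <= hit n 1 1 ^+ k.
Proof.
elim: k x y => [|k IH] x y le_kxy; first by rewrite expr0 coop_hit_le_le1.
apply: le_trans (coop_hit_le_submul n x y 1 1 x.-1 y.-1 _ _) _; try lia.
by rewrite exprS ler_wpM2l ?coop_hit_le_ge0 // IH //; lia.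
Qed.

Lemma coop_hit_le_nondecreasing n x y : hit n x y <= hit n.+1 x y.
Proof.
elim: n x y => [|n IH] x y.
  have [xy0 | xy_neq0] := eqVneq (minn x y) 0%N; first by rewrite !coop_hit_le_min0.
  by rewrite coop_hit_le0 // coop_hit_le_ge0.
by rewrite coop_hit_leS [leRHS]coop_hit_leS; apply: bin2_expect_le.
Qed.

Lemma coop_hit_le_cvg x y : cvgn (fun n => hit n x y).
Proof.
apply: nondecreasing_is_cvgn.
  by apply/nondecreasing_seqP => n; apply: coop_hit_le_nondecreasing.
by exists 1 => _ [n _ <-]; apply: coop_hit_le_le1.
Qed.

End CooperativeModel.

Theorem mainTheorem11 (R : realType) (p q : R) (N : nat) :
  0 < p < 1 -> 0 < q < 1 -> (1 <= N)%N ->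
  forall x y : nat, (N <= minn x y)%N ->
    coop_hit_prob p q x y <= coop_hit_prob p q 1 1 ^+ N.
Proof.
move=> /andP[/ltW p_ge0 /ltW p_le1] /andP[/ltW q_ge0 /ltW q_le1] _ x y le_Nxy.
have cvg_hit := coop_hit_le_cvg p q p_ge0 p_le1 q_ge0 q_le1.
have cvg_hitX :
    ((fun n => coop_hit_le p q n 1 1 ^+ N) @ \oo --> coop_hit_prob p q 1 1 ^+ N)%classic.
  exact: continuous_cvg _ (@exprn_continuous R N _) (cvg_hit 1 1).
rewrite -(cvg_lim _ cvg_hitX) //; apply: ler_lim; first exact: cvg_hit.
  exact: cvgP cvg_hitX.
by apply: nearW => n; apply: coop_hit_le_pow.
Qed.
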